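(* (a) For every $b\in\Lambda^2_0E$, the tensor $R=\vartheta(b\otimes g)+12\,\psi(b\otimes g)$ lies in $\mathcal R$, satisfies $L(R)=6R$ and $L_\sigma(R)=0$, and $\mathrm{Ric}(R)=48(n+1)b$. (b) $\vartheta(g\otimes g)+12\psi(g\otimes g)$ is a nonzero multiple of $\pi_2+6\pi_1$, and $\mathrm{Ric}(\pi_2+6\pi_1)=12(2n+1)g$. (c) If $R\in\mathcal R$ satisfies $L(R)=6R$ and $L_\sigma(R)=0$, then $\mathrm{Ric}(R)=\mathrm{Ric}^q(R)$ and $A\,\mathrm{Ric}(R)=\mathrm{Ric}(R)$ for $A=I,J,K$ (i.e. $\mathrm{Ric}(R)\in\mathbb Rg+\Lambda^2_0E$).
   Context: $\mathcal V$ is a real $4n$-dimensional vector space with inner product $g=\langle\cdot,\cdot\rangle$ and endomorphisms $I,J,K$ with $I^2=J^2=-1$, $K=IJ=-JI$, $\langle Ax,Ay\rangle=\langle x,y\rangle$; $\omega_A(x,y)=\langle x,Ay\rangle$; $\{e_i\}$ orthonormal basis, summation convention. $\mathcal R$: algebraic curvature tensors (4-linear $R$ with $R(x,y,z,u)=-R(y,x,z,u)=-R(x,y,u,z)=R(z,u,x,y)$ and first Bianchi identity). $\mathrm{Ric}(R)(x,y)=R(x,e_i,y,e_i)$, $\mathrm{Ric}^q(R)(x,y)=\sum_AR(x,e_i,Ay,Ae_i)$. For an $s$-linear form $b$: $(A_{(i)}b)(X_1,..,X_s)=-b(X_1,..,AX_i,..,X_s)$ and $(Ab)(X_1,..,X_s)=(-1)^sb(AX_1,..,AX_s)$.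 $L$ and $L_\sigma$: $L(R)=\sum_A\sum_{i<j}A_{(i)}A_{(j)}R$, $L_\sigma(R)=\sum_A(A_{(1)}A_{(2)}+A_{(2)}A_{(3)}\sigma+A_{(1)}A_{(3)}\sigma^2+A_{(3)}A_{(4)}+A_{(1)}A_{(4)}\sigma+A_{(2)}A_{(4)}\sigma^2)R$ with $\sigma R(x,y,z,u)=R(z,x,y,u)$, words applied right to left. For bilinear forms $b,c$: $(b\otimes c)(x,y,z,u)=b(x,y)c(z,u)$, $b\odot c=\tfrac12(b\otimes c+c\otimes b)$, and $(b\wedge c)(x,y,z,u)=b(x,y)c(z,u)+b(z,u)c(x,y)-b(x,z)c(y,u)-b(y,u)c(x,z)+b(x,u)c(y,z)+b(y,z)c(x,u)$. For symmetric $b,c$: $\psi(b\otimes c)(x,y,z,u)=b(x,z)c(y,u)-b(x,u)c(y,z)+c(x,z)b(y,u)-c(x,u)b(y,z)$ and $\vartheta(b\otimes c)=\sum_A\big(6(A_{(1)}-A_{(2)})b\odot(A_{(1)}-A_{(2)})c-(A_{(1)}-A_{(2)})b\wedge(A_{(1)}-A_{(2)})c\big)$. $\pi_1(x,y,z,u)=\langle x,z\rangle\langle y,u\rangle-\langle x,u\rangle\langle y,z\rangle$, $\pi_2=\sum_A(6\omega_A\odot\omega_A-\omega_A\wedge\omega_A)$. $\Lambda^2_0E$ denotes the space of symmetric trace-free bilinear forms $b$ on $\mathcal V$ with $b(Ax,Ay)=b(x,y)$ for $A=I,J,K$. *)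

(* The real 4n-dimensional Euclidean space V is modelled as
   column vectors 'cV[R]_m (m = 4n) over a real field R with the standard
   inner product; endomorphisms are m x m matrices acting by A *m x. *)
From HB Require Import structures.
From mathcomp Require Import all_boot all_order all_algebra.
Set Implicit Arguments. Unset Strict Implicit. Unset Printing Implicit Defensive.
Import Order.TTheory GRing.Theory Num.Theory.
Local Open Scope ring_scope.

Section QK.
Variable R : realFieldType.
Variable m : nat.

Definition vec := 'cV[R]_m.
Definition endo := 'M[R]_m.
Definition form2 := vec -> vec -> R.
Definition form4 := vec -> vec -> vec -> vec -> R.

Definition ip (x y : vec) : R := (x^T *m y) 0 0.
Definition ebase (i : 'I_m) : vec := delta_mx i 0.

Definition quat_struct (I J K : endo) : Prop :=
  [/\ I *m I = - 1%:M, J *m J = - 1%:M, K = I *m J, K = - (J *m I)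
    & forall A, A \in [:: I; J; K] -> forall x y : vec, ip (A *m x) (A *m y) = ip x y].

Definition sumA (I J K : endo) (F : endo -> R) : R := F I + F J + F K.

Definition omega (A : endo) : form2 := fun x y => ip x (A *m y).

Definition bilinear2 (b : form2) : Prop :=
  (forall (a : R) x x' y, b (a *: x + x') y = a * b x y + b x' y) /\
  (forall (a : R) x y y', b x (a *: y + y') = a * b x y + b x y').

Definition multilinear4 (T : form4) : Prop :=
  (forall (a : R) x x' y z u, T (a *: x + x') y z u = a * T x y z u + T x' y z u) /\
  (forall (a : R) x y y' z u, T x (a *: y + y') z u = a * T x y z u + T x y' z u) /\
  (forall (a : R) x y z z' u, T x y (a *: z + z') u = a * T x y z u + T x y z' u) /\
  (forall (a : R) x y z u u', T x y z (a *: u + u') = a * T x y z u + T x y z u').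

Definition alg_curv (T : form4) : Prop :=
  multilinear4 T /\
  (forall x y z u, T x y z u = - T y x z u) /\
  (forall x y z u, T x y z u = - T x y u z) /\
  (forall x y z u, T x y z u = T z u x y) /\
  (forall x y z u, T x y z u + T y z x u + T z x y u = 0).

Definition Ric (T : form4) : form2 :=
  fun x y => \sum_(i < m) T x (ebase i) y (ebase i).
Definition Ricq (I J K : endo) (T : form4) : form2 :=
  fun x y => sumA I J K (fun A => \sum_(i < m) T x (ebase i) (A *m y) (A *m ebase i)).

Definition a1 (A : endo) (T : form4) : form4 := fun x y z u => - T (A *m x) y z u.
Definition a2 (A : endo) (T : form4) : form4 := fun x y z u => - T x (A *m y) z u.
Definition a3 (A : endo) (T : form4) : form4 := fun x y z u => - T x y (A *m z) u.
Definition a4 (A : endo) (T : form4) : form4 := fun x y z u => - T x y z (A *m u).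
Definition b1 (A : endo) (b : form2) : form2 := fun x y => - b (A *m x) y.
Definition b2 (A : endo) (b : form2) : form2 := fun x y => - b x (A *m y).
(* A b for s = 2 : (A b)(x,y) = (-1)^2 b(Ax, Ay) *)
Definition actA2 (A : endo) (b : form2) : form2 :=
  fun x y => (-1) ^+ 2 * b (A *m x) (A *m y).

Definition sigma (T : form4) : form4 := fun x y z u => T z x y u.

Definition add4 (T S : form4) : form4 := fun x y z u => T x y z u + S x y z u.
Definition sub2 (b c : form2) : form2 := fun x y => b x y - c x y.

Definition Lop (I J K : endo) (T : form4) : form4 := fun x y z u =>
  sumA I J K (fun A =>
    a1 A (a2 A T) x y z u + a1 A (a3 A T) x y z u + a1 A (a4 A T) x y z u
  + a2 A (a3 A T) x y z u + a2 A (a4 A T) x y z u + a3 A (a4 A T) x y z u).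

Definition Lsigma (I J K : endo) (T : form4) : form4 := fun x y z u =>
  sumA I J K (fun A =>
    a1 A (a2 A T) x y z u + a2 A (a3 A (sigma T)) x y z u
  + a1 A (a3 A (sigma (sigma T))) x y z u + a3 A (a4 A T) x y z u
  + a1 A (a4 A (sigma T)) x y z u + a2 A (a4 A (sigma (sigma T))) x y z u).

Definition otimes (b c : form2) : form4 := fun x y z u => b x y * c z u.
Definition odot (b c : form2) : form4 :=
  fun x y z u => 2^-1 * (otimes b c x y z u + otimes c b x y z u).
Definition wedge (b c : form2) : form4 := fun x y z u =>
  b x y * c z u + b z u * c x y - b x z * c y u - b y u * c x z
  + b x u * c y z + b y z * c x u.

(* psi(b (x) c) and theta(b (x) c), written as functions of the pair (b, c) *)
Definition psi (b c : form2) : form4 := fun x y z u =>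
  b x z * c y u - b x u * c y z + c x z * b y u - c x u * b y z.

Definition dA (A : endo) (b : form2) : form2 := sub2 (b1 A b) (b2 A b).

Definition theta (I J K : endo) (b c : form2) : form4 := fun x y z u =>
  sumA I J K (fun A =>
    6 * odot (dA A b) (dA A c) x y z u - wedge (dA A b) (dA A c) x y z u).

Definition gform : form2 := ip.

Definition pi1 : form4 := fun x y z u => ip x z * ip y u - ip x u * ip y z.
Definition pi2 (I J K : endo) : form4 := fun x y z u =>
  sumA I J K (fun A => 6 * odot (omega A) (omega A) x y z u
                       - wedge (omega A) (omega A) x y z u).

Definition Lambda20E (I J K : endo) (b : form2) : Prop :=
  [/\ bilinear2 b, (forall x y, b x y = b y x),
      \sum_(i < m) b (ebase i) (ebase i) = 0
    & forall A, A \in [:: I; J; K] -> forall x y, b (A *m x) (A *m y) = b x y].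

End QK.

From Pilot Require Import Defs.
From HB Require Import structures.
From mathcomp Require Import all_boot all_order all_algebra.
From mathcomp Require Import ring lra.
Set Implicit Arguments. Unset Strict Implicit. Unset Printing Implicit Defensive.
Import Order.TTheory GRing.Theory Num.Theory.
Local Open Scope ring_scope.

(* For A among I, J, K let [qder A] be the derivation
   T |-> T(A.,.,.,.) + ... + T(.,.,.,A.).  The proof rests on three facts.

   1. Casimir identity: sum_A qder A (qder A T) = 2 L(T) - 12 T.  Since each
      qder A is skew-adjoint for the Euclidean inner product of 4-tensors,
      L(T) = 6 T holds iff qder A T = 0 for A = I, J, K.
   2. For an I,J,K-invariant symmetric form b, theta(b (x) g) + 12 psi(b (x) g)
      equals 4 sum_A kn(b(., A .), g(., A .)) + 12 psi(b (x) g), where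
      kn P Q = 6 P.Q - P^Q.  Both kn (for skew P, Q) and psi (for symmetric
      arguments) are algebraic curvature tensors; invariance under the three
      derivations and L_sigma = 0 are direct computations in normal form; the
      Ricci contraction is (48 + 12 dim) b + 12 (tr b) g.  Taking b = g gives (b).
   3. For T with qder A T = 0, contracting qder A T gives the A-invariance of
      Ric(T), and contracting L_sigma(T) = 0 gives Ric(T) = Ric^q(T). *)

Section LinearAlgebra.
Variables (R : realFieldType) (m : nat).
Local Notation vec := 'cV[R]_m.
Local Notation e := (@ebase R m).
Local Notation ip := (@ip R m).

Definition lin_form (f : vec -> R) := forall a x x', f (a *: x + x') = a * f x + f x'.

Lemma lin_form0 f : lin_form f -> f 0 = 0.
Proof.
move=> lf; have := lf 1 0 0; rewrite scaler0 addr0 mul1r => h.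
by apply: (@addrI _ (f 0)); rewrite addr0 -h.
Qed.

Lemma lin_formD f : lin_form f -> forall x y, f (x + y) = f x + f y.
Proof. by move=> lf x y; rewrite -{1}[x]scale1r lf mul1r. Qed.

Lemma lin_formZ f : lin_form f -> forall a x, f (a *: x) = a * f x.
Proof. by move=> lf a x; rewrite -[a *: x]addr0 lf lin_form0 // addr0. Qed.

Lemma lin_formN f : lin_form f -> forall x, f (- x) = - f x.
Proof. by move=> lf x; rewrite -scaleN1r lin_formZ // mulN1r. Qed.

Lemma bilinear2_l (f : form2 R m) y : bilinear2 f -> lin_form (f^~ y).
Proof. by case=> fl _ a x x'; apply: fl. Qed.

Lemma bilinear2_r (f : form2 R m) x : bilinear2 f -> lin_form (f x).
Proof. by case=> _ fr a y y'; apply: fr. Qed.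

Lemma bilinear2_mul (f g : vec -> R) :
  lin_form f -> lin_form g -> bilinear2 (fun s t => f s * g t).
Proof. by move=> lf lg; split=> a x x' y; rewrite ?lf ?lg; ring. Qed.

Lemma ebaseE (i k : 'I_m) : e i k 0 = (k == i)%:R.
Proof. by rewrite /ebase mxE eqxx andbT. Qed.

Lemma mx_ebase (M : 'M[R]_m) i k : (M *m e i) k 0 = M k i.
Proof.
rewrite mxE (bigD1 i) //= ebaseE eqxx mulr1 big1 ?addr0 // => j /negbTE ji.
by rewrite ebaseE ji mulr0.
Qed.

Lemma lin_form_expand f : lin_form f -> forall x, f x = \sum_i x i 0 * f (e i).
Proof.
move=> lf x; have {1}-> : x = \sum_i x i 0 *: e i.
  apply/matrixP=> k j; rewrite (ord1 j) summxE (bigD1 k) //= !mxE eqxx mulr1.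
  by rewrite big1 ?addr0 // => i ik; rewrite !mxE eq_sym (negbTE ik) mulr0.
rewrite (big_morph f (lin_formD lf) (lin_form0 lf)).
by apply: eq_bigr => i _; rewrite lin_formZ.
Qed.

Lemma ipE x y : ip x y = \sum_i x i 0 * y i 0.
Proof. by rewrite /Defs.ip mxE; apply: eq_bigr => i _; rewrite mxE. Qed.

Lemma ip_sym x y : ip x y = ip y x.
Proof. by rewrite !ipE; apply: eq_bigr => i _; rewrite mulrC. Qed.

Lemma ip_bilinear : bilinear2 (@Defs.ip R m).
Proof.
have ipr x : lin_form (ip x).
  move=> a y y'; rewrite !ipE mulr_sumr -big_split /=.
  by apply: eq_bigr => i _; rewrite !mxE; ring.
by split=> [a x x' y|a x y y']; rewrite ?ipr // ip_sym ipr (ip_sym x) (ip_sym x').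
Qed.

Lemma ip_ebase x i : ip x (e i) = x i 0.
Proof.
rewrite ipE (bigD1 i) //= ebaseE eqxx mulr1 big1 ?addr0 // => k /negbTE ki.
by rewrite ebaseE ki mulr0.
Qed.

Lemma sum_ip_ebase f y : lin_form f -> \sum_i f (e i) * ip y (e i) = f y.
Proof.
by move=> lf; rewrite [RHS](lin_form_expand lf); apply: eq_bigr => i _; rewrite ip_ebase mulrC.
Qed.

Lemma sum_basis_change (F : form2 R m) (M N : 'M[R]_m) : bilinear2 F ->
  \sum_i F (M *m e i) (N *m e i) = \sum_k \sum_l (M *m N^T) k l * F (e k) (e l).
Proof.
move=> bF.
have Fexp i : F (M *m e i) (N *m e i) = \sum_k \sum_l M k i * N l i * F (e k) (e l).
  rewrite (lin_form_expand (bilinear2_l _ bF)); apply: eq_bigr => k _.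
  rewrite (lin_form_expand (bilinear2_r _ bF)) mulr_sumr.
  by apply: eq_bigr => l _; rewrite !mx_ebase mulrA.
under eq_bigr do rewrite Fexp.
rewrite exchange_big; apply: eq_bigr => k _; rewrite exchange_big; apply: eq_bigr => l _.
by rewrite -mulr_suml !mxE; congr (_ * _); apply: eq_bigr => i _; rewrite mxE.
Qed.

Lemma sum_basis_transpose (F : form2 R m) (M : 'M[R]_m) : bilinear2 F ->
  \sum_i F (M *m e i) (e i) = \sum_i F (e i) (M^T *m e i).
Proof.
move=> bF; transitivity (\sum_i F (M *m e i) (1%:M *m e i)).
  by apply: eq_bigr => i _; rewrite mul1mx.
transitivity (\sum_i F (1%:M *m e i) (M^T *m e i)).
  by rewrite !sum_basis_change // trmxK trmx1 mulmx1 mul1mx.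
by apply: eq_bigr => i _; rewrite mul1mx.
Qed.

Lemma sum_basis_orthogonal (F : form2 R m) (M : 'M[R]_m) : bilinear2 F ->
  M *m M^T = 1%:M -> \sum_i F (M *m e i) (M *m e i) = \sum_i F (e i) (e i).
Proof.
move=> bF MMT; transitivity (\sum_i F (1%:M *m e i) (1%:M *m e i)).
  by rewrite !sum_basis_change // MMT trmx1 mulmx1.
by apply: eq_bigr => i _; rewrite mul1mx.
Qed.

End LinearAlgebra.

Section TensorPairing.
Variables (R : realFieldType) (m : nat).
Local Notation vec := 'cV[R]_m.
Local Notation e := (@ebase R m).

Section Multilinear.
Variable T : form4 R m.
Hypothesis hT : multilinear4 T.

Lemma ml4_lin1 y z u : lin_form (fun s => T s y z u).
Proof. by case: hT => h _ a x x'; apply: h. Qed.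
Lemma ml4_lin2 x z u : lin_form (fun s => T x s z u).
Proof. by case: hT => _ [h _] a y y'; apply: h. Qed.
Lemma ml4_lin3 x y u : lin_form (fun s => T x y s u).
Proof. by case: hT => _ [_ [h _]] a z z'; apply: h. Qed.
Lemma ml4_lin4 x y z : lin_form (fun s => T x y z s).
Proof. by case: hT => _ [_ [_ h]] a u u'; apply: h. Qed.

Lemma ml4_N1 x y z u : T (- x) y z u = - T x y z u.
Proof. exact: (lin_formN (ml4_lin1 y z u)). Qed.
Lemma ml4_N2 x y z u : T x (- y) z u = - T x y z u.
Proof. exact: (lin_formN (ml4_lin2 x z u)). Qed.
Lemma ml4_N3 x y z u : T x y (- z) u = - T x y z u.
Proof. exact: (lin_formN (ml4_lin3 x y u)). Qed.
Lemma ml4_N4 x y z u : T x y z (- u) = - T x y z u.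
Proof. exact: (lin_formN (ml4_lin4 x y z)). Qed.

Lemma ml4_basis0 : (forall i j k l, T (e i) (e j) (e k) (e l) = 0) ->
  forall x y z u, T x y z u = 0.
Proof.
move=> T0 x y z u; rewrite (lin_form_expand (ml4_lin1 y z u)) big1 // => i _.
rewrite (lin_form_expand (ml4_lin2 (e i) z u)) big1 ?mulr0 // => j _.
rewrite (lin_form_expand (ml4_lin3 (e i) (e j) u)) big1 ?mulr0 // => k _.
by rewrite (lin_form_expand (ml4_lin4 (e i) (e j) (e k))) big1 ?mulr0 // => l _; rewrite T0 mulr0.
Qed.

End Multilinear.

Definition qder (A : 'M[R]_m) (T : form4 R m) : form4 R m := fun x y z u =>
  T (A *m x) y z u + T x (A *m y) z u + T x y (A *m z) u + T x y z (A *m u).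

Lemma multilinear4_qder A T : multilinear4 T -> multilinear4 (qder A T).
Proof.
case=> [h1 [h2 [h3 h4]]]; rewrite /qder.
by split; [|split; [|split]] => a x1 x2 x3 x4 x5;
  rewrite ?mulmxDr -?scalemxAr ?h1 ?h2 ?h3 ?h4; ring.
Qed.

Definition tpair (S U : form4 R m) : R := \sum_i \sum_j \sum_k \sum_l
  S (e i) (e j) (e k) (e l) * U (e i) (e j) (e k) (e l).

Lemma tpair_ge0 S : 0 <= tpair S S.
Proof. by do 4 (apply: sumr_ge0 => ? _); rewrite -expr2 sqr_ge0. Qed.

Lemma tpair_eq0 S : multilinear4 S -> tpair S S = 0 -> forall x y z u, S x y z u = 0.
Proof.
move=> hS S0; apply: ml4_basis0 => // i j k l.
pose s i j k l := S (e i) (e j) (e k) (e l).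
have psum0 (F : 'I_m -> R) : (forall a, 0 <= F a) -> \sum_a F a = 0 -> forall a, F a = 0.
  by move=> F0 sF0 a; apply: (psumr_eq0P (P := xpredT)).
have nn4 i' j' k' l' : 0 <= s i' j' k' l' * s i' j' k' l' by rewrite -expr2 sqr_ge0.
have nn3 i' j' k' : 0 <= \sum_l' s i' j' k' l' * s i' j' k' l'.
  by apply: sumr_ge0 => l' _; apply: nn4.
have nn2 i' j' : 0 <= \sum_k' \sum_l' s i' j' k' l' * s i' j' k' l'.
  by apply: sumr_ge0 => k' _; apply: nn3.
have nn1 i' : 0 <= \sum_j' \sum_k' \sum_l' s i' j' k' l' * s i' j' k' l'.
  by apply: sumr_ge0 => j' _; apply: nn2.
have := psum0 _ (nn4 i j k) (psum0 _ (nn3 i j) (psum0 _ (nn2 i) (psum0 _ nn1 S0 i) j) k) l.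
by move/eqP; rewrite mulf_eq0 orbb => /eqP.
Qed.

Lemma tpairDl S1 S2 U :
  tpair (fun x y z u => S1 x y z u + S2 x y z u) U = tpair S1 U + tpair S2 U.
Proof.
rewrite /tpair -big_split; apply: eq_bigr => i _; rewrite -big_split; apply: eq_bigr => j _.
rewrite -big_split; apply: eq_bigr => k _; rewrite -big_split; apply: eq_bigr => l _.
exact: mulrDl.
Qed.

Lemma tpairDr S U1 U2 :
  tpair S (fun x y z u => U1 x y z u + U2 x y z u) = tpair S U1 + tpair S U2.
Proof.
rewrite /tpair -big_split; apply: eq_bigr => i _; rewrite -big_split; apply: eq_bigr => j _.
rewrite -big_split; apply: eq_bigr => k _; rewrite -big_split; apply: eq_bigr => l _.
exact: mulrDr.
Qed.

Lemma tpair0r S U : (forall x y z u, U x y z u = 0) -> tpair S U = 0.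
Proof. by move=> U0; do 4 (apply: big1 => ? _); rewrite U0 mulr0. Qed.

Section SkewAdjoint.
Variable A : 'M[R]_m.
Hypothesis A_skew : A^T = - A.

Lemma sum_skew_adj (f g : vec -> R) : lin_form f -> lin_form g ->
  \sum_i f (A *m e i) * g (e i) = - \sum_i f (e i) * g (A *m e i).
Proof.
move=> lf lg; rewrite (sum_basis_transpose (F := fun s t => f s * g t)) ?A_skew.
  by rewrite -sumrN; apply: eq_bigr => i _; rewrite mulNmx (lin_formN lg) mulrN.
exact: bilinear2_mul.
Qed.

Variables S U : form4 R m.
Hypotheses (hS : multilinear4 S) (hU : multilinear4 U).

Lemma tpair_skew1 : tpair (fun x y z u => S (A *m x) y z u) U
  = - tpair S (fun x y z u => U (A *m x) y z u).
Proof.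
have rot (G : 'I_m -> 'I_m -> 'I_m -> 'I_m -> R) :
    \sum_i \sum_j \sum_k \sum_l G i j k l = \sum_j \sum_k \sum_l \sum_i G i j k l.
  rewrite exchange_big; apply: eq_bigr => j _; rewrite exchange_big.
  by apply: eq_bigr => k _; rewrite exchange_big.
rewrite /tpair rot [in RHS]rot -sumrN; apply: eq_bigr => j _.
rewrite -sumrN; apply: eq_bigr => k _; rewrite -sumrN; apply: eq_bigr => l _.
exact: sum_skew_adj (ml4_lin1 hS (e j) (e k) (e l)) (ml4_lin1 hU (e j) (e k) (e l)).
Qed.

Lemma tpair_skew2 : tpair (fun x y z u => S x (A *m y) z u) U
  = - tpair S (fun x y z u => U x (A *m y) z u).
Proof.
have rot (G : 'I_m -> 'I_m -> 'I_m -> R) :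
    \sum_j \sum_k \sum_l G j k l = \sum_k \sum_l \sum_j G j k l.
  by rewrite exchange_big; apply: eq_bigr => k _; rewrite exchange_big.
rewrite /tpair -sumrN; apply: eq_bigr => i _; rewrite rot [in RHS]rot.
rewrite -sumrN; apply: eq_bigr => k _; rewrite -sumrN; apply: eq_bigr => l _.
exact: sum_skew_adj (ml4_lin2 hS (e i) (e k) (e l)) (ml4_lin2 hU (e i) (e k) (e l)).
Qed.

Lemma tpair_skew3 : tpair (fun x y z u => S x y (A *m z) u) U
  = - tpair S (fun x y z u => U x y (A *m z) u).
Proof.
rewrite /tpair -sumrN; apply: eq_bigr => i _; rewrite -sumrN; apply: eq_bigr => j _.
rewrite exchange_big [in RHS]exchange_big -sumrN; apply: eq_bigr => l _.
exact: sum_skew_adj (ml4_lin3 hS (e i) (e j) (e l)) (ml4_lin3 hU (e i) (e j) (e l)).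
Qed.

Lemma tpair_skew4 : tpair (fun x y z u => S x y z (A *m u)) U
  = - tpair S (fun x y z u => U x y z (A *m u)).
Proof.
rewrite /tpair -sumrN; apply: eq_bigr => i _; rewrite -sumrN; apply: eq_bigr => j _.
rewrite -sumrN; apply: eq_bigr => k _.
exact: sum_skew_adj (ml4_lin4 hS (e i) (e j) (e k)) (ml4_lin4 hU (e i) (e j) (e k)).
Qed.

Lemma tpair_qder : tpair (qder A S) U = - tpair S (qder A U).
Proof.
by rewrite !tpairDl !tpairDr tpair_skew1 tpair_skew2 tpair_skew3 tpair_skew4 !opprD.
Qed.

End SkewAdjoint.
End TensorPairing.

Section CurvatureTensors.
Variables (R : realFieldType) (m : nat).
Local Notation e := (@ebase R m).
Local Notation ip := (@ip R m).

Definition sym2 (P : form2 R m) := forall x y, P x y = P y x.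
Definition skew2 (P : form2 R m) := forall x y, P x y = - P y x.

(* Skew forms vanish on the diagonal (2 is invertible). *)
Lemma skew2_diag P : skew2 P -> forall x, P x x = 0.
Proof.
move=> sP x; have /eqP := sP x x.
by rewrite -subr_eq0 opprK -mulr2n -mulr_natr mulf_eq0 pnatr_eq0 orbF => /eqP.
Qed.

Definition kn (P Q : form2 R m) : form4 R m :=
  fun x y z u => 6 * odot P Q x y z u - wedge P Q x y z u.

(* The expansion of [kn] without the factor 1/2 hidden in [odot]. *)
Lemma knE P Q x y z u : kn P Q x y z u =
  3 * (P x y * Q z u + Q x y * P z u) - wedge P Q x y z u.
Proof.
have six_half : 6 * 2^-1 = 3 :> R.
  by rewrite (_ : 6 = 3 * 2 :> R) ?mulfK ?pnatr_eq0 //; ring.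
by rewrite /kn /odot /otimes mulrA six_half.
Qed.

(* Put the arguments of a (skew or symmetric) form in the order x, y, z, u. *)
Ltac orient_pair P x y := rewrite ?(P y x).
Ltac orient P x y z u :=
  orient_pair P x y; orient_pair P x z; orient_pair P x u;
  orient_pair P y z; orient_pair P y u; orient_pair P z u.

Lemma alg_curv_kn P Q : bilinear2 P -> bilinear2 Q -> skew2 P -> skew2 Q ->
  alg_curv (kn P Q).
Proof.
move=> [Pl Pr] [Ql Qr] sP sQ; split; first split; [|split; [|split]|].
- by move=> *; rewrite !knE /wedge !(Pl, Ql); ring.
- by move=> *; rewrite !knE /wedge !(Pl, Pr, Ql, Qr); ring.
- by move=> *; rewrite !knE /wedge !(Pl, Pr, Ql, Qr); ring.
- by move=> *; rewrite !knE /wedge !(Pr, Qr); ring.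
split; [|split; [|split]] => x y z u; rewrite !knE /wedge;
  orient sP x y z u; orient sQ x y z u; ring.
Qed.

Lemma alg_curv_psi b c : bilinear2 b -> bilinear2 c -> sym2 b -> sym2 c ->
  alg_curv (psi b c).
Proof.
move=> [bl br] [cl cr] sb sc; split; first split; [|split; [|split]|].
- by move=> *; rewrite /psi !(bl, cl); ring.
- by move=> *; rewrite /psi !(bl, br, cl, cr); ring.
- by move=> *; rewrite /psi !(bl, br, cl, cr); ring.
- by move=> *; rewrite /psi !(br, cr); ring.
split; [|split; [|split]] => x y z u; rewrite /psi;
  orient sb x y z u; orient sc x y z u; ring.
Qed.

Lemma alg_curv_add (T S : form4 R m) : alg_curv T -> alg_curv S ->
  alg_curv (fun x y z u => T x y z u + S x y z u).
Proof.
move=> [[T1 [T2 [T3 T4]]] [Ta [Tb [Tc Td]]]] [[S1 [S2 [S3 S4]]] [Sa [Sb [Sc Sd]]]].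
split; first split; [|split; [|split]|].
- by move=> *; rewrite T1 S1; ring.
- by move=> *; rewrite T2 S2; ring.
- by move=> *; rewrite T3 S3; ring.
- by move=> *; rewrite T4 S4; ring.
split; [|split; [|split]] => x y z u.
- by rewrite Ta Sa opprD.
- by rewrite Tb Sb opprD.
- by rewrite Tc Sc.
- rewrite -[RHS](addr0 0) -{1}(Td x y z u) -(Sd x y z u); ring.
Qed.

Lemma alg_curv_scale c (T : form4 R m) : alg_curv T ->
  alg_curv (fun x y z u => c * T x y z u).
Proof.
move=> [[T1 [T2 [T3 T4]]] [Ta [Tb [Tc Td]]]].
split; first split; [|split; [|split]|].
- by move=> *; rewrite T1; ring.
- by move=> *; rewrite T2; ring.
- by move=> *; rewrite T3; ring.
- by move=> *; rewrite T4; ring.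
split; [|split; [|split]] => x y z u.
- by rewrite Ta mulrN.
- by rewrite Tb mulrN.
- by rewrite Tc.
- by rewrite -!mulrDr Td mulr0.
Qed.

Lemma Ric_ext (T S : form4 R m) x y :
  (forall x y z u, T x y z u = S x y z u) -> Ric T x y = Ric S x y.
Proof. by move=> TS; apply: eq_bigr => i _; rewrite TS. Qed.

Lemma Ric_add (T S : form4 R m) x y :
  Ric (fun x y z u => T x y z u + S x y z u) x y = Ric T x y + Ric S x y.
Proof. exact: big_split. Qed.

Lemma Ric_scale c (T : form4 R m) x y :
  Ric (fun x y z u => c * T x y z u) x y = c * Ric T x y.
Proof. by rewrite /Ric mulr_sumr. Qed.

Lemma Ric_kn P Q x y : skew2 P -> skew2 Q ->
  Ric (kn P Q) x y = 3 * \sum_i (P x (e i) * Q y (e i) + Q x (e i) * P y (e i)).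
Proof.
move=> sP sQ; rewrite /Ric mulr_sumr; apply: eq_bigr => i _.
by rewrite knE /wedge !skew2_diag // (sP (e i) y) (sQ (e i) y); ring.
Qed.

Lemma sum_ip_diag : \sum_(i < m) ip (e i) (e i) = m%:R.
Proof.
by under eq_bigr do rewrite ip_ebase ebaseE eqxx; rewrite sumr_const card_ord.
Qed.

Lemma Ric_psi_ip b x y : bilinear2 b -> sym2 b ->
  Ric (psi b ip) x y = (m%:R - 2) * b x y + (\sum_i b (e i) (e i)) * ip x y.
Proof.
move=> bb sb; rewrite /Ric /psi !big_split /= !sumrN -!mulr_sumr sum_ip_diag.
have contr v w : \sum_i b v (e i) * ip w (e i) = b v w.
  by apply: sum_ip_ebase; exact: bilinear2_r _ bb.
have contr1 : \sum_i b x (e i) * ip (e i) y = b x y.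
  by rewrite -contr; apply: eq_bigr => i _; rewrite ip_sym.
have contr2 : \sum_i ip x (e i) * b (e i) y = b x y.
  by rewrite (sb x y) -contr; apply: eq_bigr => i _; rewrite mulrC (sb (e i) y).
by rewrite contr1 contr2; ring.
Qed.

End CurvatureTensors.

Section Quaternionic.
Variables (R : realFieldType) (m : nat) (I J K : 'M[R]_m).
Hypothesis HQ : quat_struct I J K.
Local Notation vec := 'cV[R]_m.
Local Notation e := (@ebase R m).
Local Notation ip := (@ip R m).
Local Notation inQ A := (A \in [:: I; J; K]).

Lemma mulII : I *m I = - 1%:M. Proof. by case: HQ. Qed.
Lemma mulJJ : J *m J = - 1%:M. Proof. by case: HQ. Qed.
Lemma mulIJ : I *m J = K. Proof. by case: HQ. Qed.
Lemma mulJI : J *m I = - K. Proof. by case: HQ => _ _ _ -> _; rewrite opprK. Qed.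
Lemma mulIK : I *m K = - J. Proof. by rewrite -mulIJ mulmxA mulII mulNmx mul1mx. Qed.
Lemma mulKJ : K *m J = - I. Proof. by rewrite -mulIJ -mulmxA mulJJ mulmxN mulmx1. Qed.
Lemma mulKI : K *m I = J. Proof. by rewrite -{1}mulIJ -mulmxA mulJI mulmxN mulIK opprK. Qed.
Lemma mulJK : J *m K = I. Proof. by rewrite -mulIJ mulmxA mulJI mulNmx mulKJ opprK. Qed.
Lemma mulKK : K *m K = - 1%:M. Proof. by rewrite -{2}mulIJ mulmxA mulKI mulJJ. Qed.

Lemma inQ_I : inQ I. Proof. by rewrite !inE eqxx. Qed.
Lemma inQ_J : inQ J. Proof. by rewrite !inE eqxx orbT. Qed.
Lemma inQ_K : inQ K. Proof. by rewrite !inE eqxx !orbT. Qed.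

Lemma inQ_sq A : inQ A -> A *m A = - 1%:M.
Proof. by rewrite !inE => /or3P[] /eqP->; [exact: mulII|exact: mulJJ|exact: mulKK]. Qed.

Lemma inQ_sqv A : inQ A -> forall x : vec, A *m (A *m x) = - x.
Proof. by move=> hA x; rewrite mulmxA inQ_sq // mulNmx mul1mx. Qed.

Lemma inQ_orth A : inQ A -> forall x y, ip (A *m x) (A *m y) = ip x y.
Proof. by case: HQ => _ _ _ _; apply. Qed.

(* Each of I, J, K is orthogonal with square -1, hence skew. *)
Lemma inQ_tr A : inQ A -> A^T = - A.
Proof.
move=> hA; have ATA : A^T *m A = 1%:M.
  apply/matrixP=> i j; have := inQ_orth hA (e i) (e j).
  rewrite ipE ip_ebase ebaseE !mxE eq_sym => <-.
  by apply: eq_bigr => k _; rewrite !mx_ebase mxE.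
by rewrite -[A^T]mulmx1 -[1%:M]opprK -(inQ_sq hA) mulmxN mulmxA ATA mul1mx.
Qed.

Lemma inQ_orthogonal A : inQ A -> A *m A^T = 1%:M.
Proof. by move=> hA; rewrite inQ_tr // mulmxN inQ_sq // opprK. Qed.

Definition qinv_form (f : form2 R m) :=
  [/\ bilinear2 f, forall x y, f x y = f y x
    & forall A, inQ A -> forall x y, f (A *m x) (A *m y) = f x y].

Lemma qinv_ip : qinv_form ip.
Proof. by split; [exact: ip_bilinear|exact: ip_sym|exact: inQ_orth]. Qed.

Lemma qinv_Lambda20E b : Lambda20E I J K b -> qinv_form b.
Proof. by case. Qed.

Section InvariantForm.
Variable f : form2 R m.
Hypothesis hf : qinv_form f.

Lemma qf_bilinear : bilinear2 f. Proof. by case: hf. Qed.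
Lemma qf_sym x y : f x y = f y x. Proof. by case: hf. Qed.

Lemma qf_Nl x y : f (- x) y = - f x y.
Proof. by rewrite (lin_formN (bilinear2_l _ qf_bilinear)). Qed.
Lemma qf_Nr x y : f x (- y) = - f x y.
Proof. by rewrite (lin_formN (bilinear2_r _ qf_bilinear)). Qed.

Lemma qf_skew A : inQ A -> forall x y, f (A *m x) y = - f x (A *m y).
Proof. by case: hf => _ _ finv hA x y; rewrite -(finv A) // inQ_sqv // qf_Nl. Qed.

Lemma qf_swap A : inQ A -> forall x y, f y (A *m x) = - f x (A *m y).
Proof. by move=> hA x y; rewrite qf_sym qf_skew. Qed.

Lemma dA_qinv A : inQ A -> forall x y, dA A f x y = 2 * f x (A *m y).
Proof. by move=> hA x y; rewrite /dA /sub2 /b1 /b2 qf_skew //; ring. Qed.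

Lemma sum_twist_ip A x y : inQ A -> \sum_i f x (A *m e i) * ip y (A *m e i) = f x y.
Proof.
move=> hA; rewrite (sum_basis_orthogonal (F := fun s t => f x s * ip y t)) ?inQ_orthogonal //.
  by rewrite sum_ip_ebase //; exact: bilinear2_r _ qf_bilinear.
by apply: bilinear2_mul;
  [exact: (bilinear2_r x qf_bilinear)|exact: (bilinear2_r y (@ip_bilinear R m))].
Qed.

End InvariantForm.

Lemma sum_qder2 T : multilinear4 T -> forall x y z u,
  sumA I J K (fun A => qder A (qder A T) x y z u)
  = 2 * Lop I J K T x y z u - 12 * T x y z u.
Proof.
move=> hT x y z u; rewrite /qder /Lop /sumA /a1 /a2 /a3 /a4.
rewrite !(inQ_sqv inQ_I) !(inQ_sqv inQ_J) !(inQ_sqv inQ_K).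
by rewrite !(ml4_N1 hT) !(ml4_N2 hT) !(ml4_N3 hT) !(ml4_N4 hT); ring.
Qed.

Lemma Lop_of_qder0 T : multilinear4 T ->
  (forall A, inQ A -> forall x y z u, qder A T x y z u = 0) ->
  forall x y z u, Lop I J K T x y z u = 6 * T x y z u.
Proof.
move=> hT hD x y z u; have := sum_qder2 hT x y z u.
have DD A : inQ A -> qder A (qder A T) x y z u = 0.
  by move=> hA; rewrite {1}/qder !hD // !addr0.
rewrite /sumA !DD ?inQ_I ?inQ_J ?inQ_K // => h; lra.
Qed.

(* Conversely, L(T) = 6 T forces the derivations to vanish: their squared
   norms add up to -<T, sum_A qder A (qder A T)> = 0. *)
Lemma qder0_of_Lop T : multilinear4 T ->
  (forall x y z u, Lop I J K T x y z u = 6 * T x y z u) ->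
  forall A, inQ A -> forall x y z u, qder A T x y z u = 0.
Proof.
move=> hT hL.
have adj A : inQ A -> tpair (qder A T) (qder A T) = - tpair T (qder A (qder A T)).
  by move=> hA; apply: tpair_qder; [exact: inQ_tr|exact: hT|exact: multilinear4_qder].
have sum0 : tpair (qder I T) (qder I T) + tpair (qder J T) (qder J T)
          + tpair (qder K T) (qder K T) = 0.
  rewrite !adj ?inQ_I ?inQ_J ?inQ_K // -!opprD -!tpairDr.
  rewrite tpair0r ?oppr0 // => x y z u.
  by have := sum_qder2 hT x y z u; rewrite /sumA hL => ->; ring.
move: sum0 => /eqP; rewrite !paddr_eq0 ?addr_ge0 ?tpair_ge0 //.
move=> /andP[/andP[/eqP DI /eqP DJ] /eqP DK].
move=> A; rewrite !inE => /or3P[] /eqP->;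
  by apply: tpair_eq0; rewrite ?DI ?DJ ?DK //; apply: multilinear4_qder.
Qed.

Definition twist (f : form2 R m) (A : 'M[R]_m) : form2 R m := fun x y => f x (A *m y).

Lemma skew2_twist (f : form2 R m) A : qinv_form f -> inQ A -> skew2 (twist f A).
Proof. by move=> hf hA x y; rewrite /twist qf_swap. Qed.

Definition qtensor (b : form2 R m) : form4 R m := fun x y z u =>
  theta I J K b (@gform R m) x y z u + 12 * psi b (@gform R m) x y z u.

Lemma theta_kn (b c : form2 R m) x y z u :
  theta I J K b c x y z u = sumA I J K (fun A => kn (dA A b) (dA A c) x y z u).
Proof. by []. Qed.

Lemma dA_bilinear A (f : form2 R m) : bilinear2 f -> bilinear2 (dA A f).
Proof.
case=> fl fr; rewrite /dA /sub2 /b1 /b2.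
by split=> a x x' y; rewrite ?mulmxDr -?scalemxAr ?fl ?fr; ring.
Qed.

Lemma dA_skew A (f : form2 R m) : sym2 f -> skew2 (dA A f).
Proof. by move=> sf x y; rewrite /dA /sub2 /b1 /b2 (sf y) (sf (A *m y)); ring. Qed.

Lemma alg_curv_theta (b c : form2 R m) :
  bilinear2 b -> bilinear2 c -> sym2 b -> sym2 c -> alg_curv (theta I J K b c).
Proof.
move=> bb bc sb sc.
have H A : alg_curv (kn (dA A b) (dA A c)).
  by apply: alg_curv_kn; [exact: dA_bilinear|exact: dA_bilinear|exact: dA_skew|exact: dA_skew].
by rewrite /theta /sumA; apply: alg_curv_add; first apply: alg_curv_add; exact: H.
Qed.

(* Part (a), first claim: only the symmetry of b is needed. *)
Lemma alg_curv_qtensor (b : form2 R m) : bilinear2 b -> sym2 b -> alg_curv (qtensor b).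
Proof.
move=> bb sb; have [gb gs] : bilinear2 (@gform R m) /\ sym2 (@gform R m).
  by split; [exact: ip_bilinear|exact: ip_sym].
apply: alg_curv_add; first exact: alg_curv_theta.
by apply: alg_curv_scale; apply: alg_curv_psi.
Qed.

Lemma Ric_sumA (T : 'M[R]_m -> form4 R m) x y :
  Ric (fun x y z u => sumA I J K (fun A => T A x y z u)) x y
  = sumA I J K (fun A => Ric (T A) x y).
Proof. by rewrite /Ric /sumA -!big_split. Qed.

Section InvariantQTensor.
Variable b : form2 R m.
Hypothesis hb : qinv_form b.

(* For invariant b, dA A b and dA A g are twice the twisted forms. *)
Lemma qtensorE x y z u : qtensor b x y z u =
  4 * sumA I J K (fun A => kn (twist b A) (twist ip A) x y z u) + 12 * psi b ip x y z u.
Proof.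
rewrite /qtensor theta_kn /sumA /gform !knE /wedge /twist.
rewrite !(dA_qinv hb inQ_I) !(dA_qinv hb inQ_J) !(dA_qinv hb inQ_K).
by rewrite !(dA_qinv qinv_ip inQ_I) !(dA_qinv qinv_ip inQ_J) !(dA_qinv qinv_ip inQ_K); ring.
Qed.

(* Normal form of an expression built from b, g, I, J, K and the vectors
   x, y, z, u: every matrix is moved to the second argument of b or g, products
   of matrices are evaluated in the quaternion table, and the arguments are
   ordered as x < y < z < u using the symmetries of b(., A .) and g(., A .). *)
Ltac qskew := rewrite ?(qf_skew hb inQ_I) ?(qf_skew hb inQ_J) ?(qf_skew hb inQ_K)
  ?(qf_skew qinv_ip inQ_I) ?(qf_skew qinv_ip inQ_J) ?(qf_skew qinv_ip inQ_K).
Ltac qprod := rewrite ?mulmxN ?mulmxA;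
  rewrite ?(mulII, mulJJ, mulKK, mulIJ, mulJI, mulIK, mulKI, mulJK, mulKJ, mulNmx, mul1mx);
  rewrite ?(qf_Nl hb, qf_Nr hb, qf_Nl qinv_ip, qf_Nr qinv_ip, opprK).
Ltac qorient2 f x y := rewrite ?(qf_sym f y x) ?(qf_swap f inQ_I x y)
  ?(qf_swap f inQ_J x y) ?(qf_swap f inQ_K x y).
Ltac qorient f x y z u := qorient2 f x y; qorient2 f x z; qorient2 f x u;
  qorient2 f y z; qorient2 f y u; qorient2 f z u.

(* Replace every occurrence of qtensor b by its normal form, one occurrence
   at a time so that the rewriting always acts on a small term. *)
Ltac qexpand x y z u :=
  repeat match goal with |- context [qtensor b ?p ?q ?r ?s] =>
    let ty := type of (qtensor b p q r s) in
    let E := fresh "E" in let h := fresh "h" in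
    evar (E : ty);
    assert (h : qtensor b p q r s = E);
      [ rewrite qtensorE /sumA !knE /wedge /psi /twist; qskew; qprod;
        qorient hb x y z u; qorient qinv_ip x y z u; rewrite /E; reflexivity
      | rewrite h; clear h; subst E ]
  end.

Lemma qder_qtensor A : inQ A -> forall x y z u, qder A (qtensor b) x y z u = 0.
Proof. by rewrite !inE => /or3P[] /eqP-> x y z u; rewrite /qder; qexpand x y z u; ring. Qed.

Lemma Lsigma_qtensor x y z u : Lsigma I J K (qtensor b) x y z u = 0.
Proof. by rewrite /Lsigma /sumA /a1 /a2 /a3 /a4 /sigma; qexpand x y z u; ring. Qed.

(* The contraction of one block kn(b(., A .), g(., A .)): by [Ric_kn] each block
   contributes 3 * 2 b to the Ricci tensor. *)
Lemma sum_kn_twist A x y : inQ A ->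
  \sum_i (twist b A x (e i) * twist ip A y (e i) + twist ip A x (e i) * twist b A y (e i))
  = 2 * b x y.
Proof.
move=> hA; rewrite big_split /= /twist !sum_twist_ip //.
under eq_bigr do rewrite mulrC.
by rewrite sum_twist_ip // (qf_sym hb y); ring.
Qed.

Lemma Ric_qtensor x y : Ric (qtensor b) x y =
  (48 + 12 * m%:R) * b x y + 12 * (\sum_i b (e i) (e i)) * ip x y.
Proof.
rewrite (Ric_ext _ _ qtensorE) Ric_add !Ric_scale Ric_sumA /sumA.
rewrite !Ric_kn; try by apply: skew2_twist;
  [exact: hb || exact: qinv_ip | exact: inQ_I || exact: inQ_J || exact: inQ_K].
rewrite !sum_kn_twist ?inQ_I ?inQ_J ?inQ_K // Ric_psi_ip; first ring.
- exact: qf_bilinear.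
- exact: qf_sym.
Qed.

End InvariantQTensor.

(* For b = g the tensor is a multiple of the curvature of quaternionic
   projective space. *)
Lemma qtensor_ip x y z u :
  qtensor (@gform R m) x y z u = 4 * (pi2 I J K x y z u + 6 * pi1 x y z u).
Proof.
rewrite (qtensorE qinv_ip) (_ : pi2 I J K x y z u = sumA I J K
  (fun A => kn (omega A) (omega A) x y z u)) //.
by rewrite /sumA !knE /wedge /psi /pi1 /twist /omega; ring.
Qed.

Lemma Ric_pi x y : Ric (fun x y z u => pi2 I J K x y z u + 6 * pi1 x y z u) x y
  = (12 + 6 * m%:R) * ip x y.
Proof.
rewrite (Ric_ext _ _ (S := fun x y z u => 4^-1 * qtensor (@gform R m) x y z u)); last first.
  by move=> x' y' z' u'; rewrite qtensor_ip mulKf // pnatr_eq0.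
by rewrite Ric_scale (Ric_qtensor qinv_ip) sum_ip_diag /gform; field.
Qed.


Section InvariantCurvature.
Variable T : form4 R m.
Hypothesis hT : alg_curv T.
Hypothesis hD : forall A, inQ A -> forall x y z u, qder A T x y z u = 0.

Let Tml : multilinear4 T. Proof. by case: hT. Qed.
Let T_as12 x y z u : T x y z u = - T y x z u. Proof. by case: hT => _ []. Qed.
Let T_as34 x y z u : T x y z u = - T x y u z. Proof. by case: hT => _ [_ []]. Qed.
Let T_pair x y z u : T x y z u = T z u x y. Proof. by case: hT => _ [_ [_ []]]. Qed.
Let T_bianchi x y z u : T x y z u + T y z x u + T z x y u = 0.
Proof. by case: hT => _ [_ [_ [_]]]. Qed.

Let bil24 p q : bilinear2 (fun s t => T p s q t).
Proof. by split=> a s s' t; [exact: (ml4_lin2 Tml p q t)|exact: (ml4_lin4 Tml p s q)]. Qed.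
Let bil14 p q : bilinear2 (fun s t => T s p q t).
Proof. by split=> a s s' t; [exact: (ml4_lin1 Tml p q t)|exact: (ml4_lin4 Tml s p q)]. Qed.

Local Notation rho A u v := (\sum_i T u (e i) v (A *m e i)).

Lemma sum_T24 A p q : inQ A -> \sum_i T p (A *m e i) q (e i) = - rho A p q.
Proof.
move=> hA; rewrite (sum_basis_transpose _ (bil24 p q)) inQ_tr //.
by rewrite -sumrN; apply: eq_bigr => i _; rewrite mulNmx (ml4_N4 Tml).
Qed.

Lemma sum_T24_orth A p q : inQ A -> \sum_i T p (A *m e i) q (A *m e i) = Ric T p q.
Proof. by move=> hA; rewrite (sum_basis_orthogonal (bil24 p q)) ?inQ_orthogonal. Qed.

Lemma sum_T14 p q : \sum_i T (e i) p q (e i) = - Ric T p q.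
Proof. by rewrite /Ric -sumrN; apply: eq_bigr => i _; rewrite T_as12. Qed.

Lemma sum_T14_orth A p q : inQ A -> \sum_i T (A *m e i) p q (A *m e i) = - Ric T p q.
Proof.
by move=> hA; rewrite (sum_basis_orthogonal (bil14 p q)) ?inQ_orthogonal ?sum_T14.
Qed.

Lemma rho_skew A u v : inQ A -> rho A u v = - rho A v u.
Proof. by move=> hA; rewrite -sum_T24 //; apply: eq_bigr => i _; rewrite T_pair. Qed.

(* A in slot 3 is traded for rho by the first Bianchi identity, and by
   antisymmetry in the last two slots the same holds with A in slot 4. *)
Lemma sum_T34 A u v : inQ A -> \sum_i T u v (A *m e i) (e i) = 2 * rho A v u.
Proof.
move=> hA; have -> : \sum_i T u v (A *m e i) (e i)
    = - \sum_i T v (A *m e i) u (e i) - \sum_i T (A *m e i) u v (e i).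
  rewrite -!sumrN -big_split; apply: eq_bigr => i _ /=.
  by move: (T_bianchi u v (A *m e i) (e i)); lra.
under [X in _ - X]eq_bigr => i _ do rewrite T_as12.
by rewrite sumrN !sum_T24 // (rho_skew u v hA); ring.
Qed.

Lemma sum_T43 A u v : inQ A -> \sum_i T u v (e i) (A *m e i) = - (2 * rho A v u).
Proof.
move=> hA; rewrite -sum_T34 // -sumrN.
by apply: eq_bigr => i _; rewrite T_as34.
Qed.

Lemma Ric_sym x y : Ric T x y = Ric T y x.
Proof. by apply: eq_bigr => i _; rewrite T_pair. Qed.

(* Contracting qder A T = 0 against (e_i, e_i) and against (e_i, A e_i):
   Ric(T) and rho A are A-skew. *)
Lemma Ric_skew A x y : inQ A -> Ric T (A *m x) y = - Ric T x (A *m y).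
Proof.
move=> hA; have : \sum_i qder A T x (e i) y (e i) = 0 by apply: big1 => i _; exact: hD.
by rewrite /qder !big_split /= sum_T24 // /Ric; lra.
Qed.

Lemma rho_qder A x y : inQ A -> rho A (A *m x) y = - rho A x (A *m y).
Proof.
move=> hA; have : \sum_i qder A T x (e i) y (A *m e i) = 0 by apply: big1 => i _; exact: hD.
rewrite /qder !big_split /= sum_T24_orth //.
under [X in _ + X]eq_bigr do rewrite (inQ_sqv hA) (ml4_N4 Tml).
by rewrite sumrN /Ric; lra.
Qed.

Lemma Ric_inv A x y : inQ A -> Ric T (A *m x) (A *m y) = Ric T x y.
Proof.
move=> hA; rewrite Ric_skew // inQ_sqv // /Ric -sumrN.
by apply: eq_bigr => i _; rewrite (ml4_N3 Tml) opprK.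
Qed.

(* Part (c), first claim: contracting L_sigma(T) = 0, each A contributes
   6 rho_A(x, A y) - 2 Ric(x, y), and Ric^q(x, y) = sum_A rho_A(x, A y). *)
Lemma Ric_Ricq : (forall x y z u, Lsigma I J K T x y z u = 0) ->
  forall x y, Ric T x y = Ricq I J K T x y.
Proof.
move=> hLs x y; have : \sum_i Lsigma I J K T x (e i) y (e i) = 0.
  by apply: big1 => i _; exact: hLs.
rewrite /Lsigma /sumA /a1 /a2 /a3 /a4 /sigma !big_split /= !sumrN !opprK.
rewrite !sum_T24 ?sum_T34 ?sum_T43 ?sum_T14 ?sum_T14_orth ?inQ_I ?inQ_J ?inQ_K //.
rewrite !rho_qder ?Ric_inv ?inQ_I ?inQ_J ?inQ_K // (Ric_sym y x) /Ricq /sumA; lra.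
Qed.

Lemma Ric_qinv A : inQ A -> forall x y, actA2 A (Ric T) x y = Ric T x y.
Proof. by move=> hA x y; rewrite /actA2 sqrrN expr1n mul1r Ric_inv. Qed.

End InvariantCurvature.

End Quaternionic.

Theorem proposition4p2 (R : realFieldType) (n : nat) (I J K : 'M[R]_(4 * n)) :
  (0 < n)%N ->
  quat_struct I J K ->
  (* (a) *)
  (forall b : form2 R (4 * n), Lambda20E I J K b ->
     let T := fun x y z u => theta I J K b (gform (m:=4*n)) x y z u
                             + 12 * psi b (gform (m:=4*n)) x y z u in
     [/\ alg_curv T,
         (forall x y z u, Lop I J K T x y z u = 6 * T x y z u),
         (forall x y z u, Lsigma I J K T x y z u = 0)
       & (forall x y, Ric T x y = 48 * (n%:R + 1) * b x y)]) /\
  (* (b) *)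
  ((exists c : R, c != 0 /\
      forall x y z u,
        theta I J K (gform (m:=4*n)) (gform (m:=4*n)) x y z u
        + 12 * psi (gform (m:=4*n)) (gform (m:=4*n)) x y z u
        = c * (pi2 I J K x y z u + 6 * pi1 x y z u)) /\
   (forall x y, Ric (fun x y z u => pi2 I J K x y z u + 6 * pi1 x y z u) x y
                = 12 * (2 * n%:R + 1) * gform x y)) /\
  (* (c) *)
  (forall T : form4 R (4 * n), alg_curv T ->
     (forall x y z u, Lop I J K T x y z u = 6 * T x y z u) ->
     (forall x y z u, Lsigma I J K T x y z u = 0) ->
     (forall x y, Ric T x y = Ricq I J K T x y) /\
     (forall A, A \in [:: I; J; K] -> forall x y, actA2 A (Ric T) x y = Ric T x y)).
Proof.
move=> _ HQ; split; [|split].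
- move=> b Hb T; have hb := qinv_Lambda20E Hb; have [bb sb _] := hb.
  have curvT : alg_curv T by exact: alg_curv_qtensor.
  split=> //.
  + by apply: Lop_of_qder0 => //; [case: curvT|exact: qder_qtensor].
  + exact: Lsigma_qtensor.
  + case: Hb => _ _ trb0 _ x y.
    by rewrite /T (Ric_qtensor HQ hb) trb0 mulr0 mul0r addr0 natrM; ring.
- split.
  + by exists 4; split; [rewrite pnatr_eq0 | exact: qtensor_ip].
  + by move=> x y; rewrite (Ric_pi HQ) natrM /gform; ring.
- move=> T curvT hL hLs.
  have hD := qder0_of_Lop HQ (proj1 curvT) hL.
  by split; [exact: Ric_Ricq | exact: Ric_qinv].
Qed.
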